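(* Let $\phi$ be the real root of $x^3=x^2+x+1$. For each integer $n\ge 4$, there exists an integer sequence $\langle a_i\rangle_{i=1}^n$ with $a_i=a_{i-1}+a_{i-2}+a_{i-3}$ for $4\le i\le n$, $a_n=0$, $a_1>0$, $a_2\le 0$, $a_3<0$ and $a_1<0.81\phi^{n/2}$. Similarly, for each integer $n\ge 4$ there exists an integer sequence $\langle b_i\rangle_{i=1}^n$ with $b_i=b_{i-1}+b_{i-2}+b_{i-3}$ for $4\le i\le n$, $b_n=0$, $b_2>0$, $b_1\le 0$, $b_3<0$ and $b_2<0.64\phi^{n/2}$. *)

From Stdlib Require Import Reals ZArith.
Open Scope R_scope.

(* phi is a real root of x^3 = x^2 + x + 1 (the cubic has exactly one real root,
   the tribonacci constant). *)
Definition is_trib_root (phi : R) : Prop := phi ^ 3 = phi ^ 2 + phi + 1.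

Definition trib_rec (a : nat -> Z) (n : nat) : Prop :=
  forall i : nat, (4 <= i <= n)%nat ->
    a i = (a (i - 1)%nat + a (i - 2)%nat + a (i - 3)%nat)%Z.

From Stdlib Require Import Reals ZArith Lra Lia Psatz.
Open Scope R_scope.

(* Read backwards from a_n = 0, every sequence satisfying the recurrence is
   a_i = x t_(n-i) + y t_(n-i+1), where t is the backward tribonacci sequence
   t_0 = t_1 = 0, t_2 = 1, t_(k+3) = t_k - t_(k+1) - t_(k+2).  The linear form
   L(a,b,c) = phi a + (phi^2 - phi) b + c and a quadratic form Q >= 0 vanishing only
   on the line through (phi^2, phi, 1) take the values L = phi^(-m), Q = phi^(m+1) on
   the window (t_m, t_(m+1), t_(m+2)): the window hugs the plane L = 0 while its
   Q-size grows.  Near that plane the signs of the first three terms depend only on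
   the slope of (t_m, t_(m+1)), and one of eight small pairs (x, y) always yields the
   required sign pattern.  The entry a_1 (resp. b_2) is a linear functional of the
   window, so Cauchy-Schwarz for Q bounds its square by phi^(m+1) times the squared
   Q-dual norm of the functional, which is below 0.81^2 phi^2 (resp. 0.64^2 phi^2).
   Lengths n <= 7 are checked directly. *)

Lemma trib_root_bounds (phi : R) :
  is_trib_root phi -> 18392/10000 < phi < 18393/10000.
Proof. unfold is_trib_root; intro h; assert (0 < phi) by nra; split; nra. Qed.

Fixpoint back_trib (k : nat) : Z :=
  match k with
  | S ((S ((S j) as k2)) as k1) => (back_trib j - back_trib k2 - back_trib k1)%Z
  | 2%nat => 1%Z
  | _ => 0%Z
  end.

Lemma back_trib_SSS (k : nat) :
  back_trib (S (S (S k))) = (back_trib k - back_trib (S k) - back_trib (S (S k)))%Z.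
Proof. reflexivity. Qed.

Lemma IZR_back_trib_SSS (k : nat) :
  IZR (back_trib (S (S (S k)))) =
  IZR (back_trib k) - IZR (back_trib (S k)) - IZR (back_trib (S (S k))).
Proof. now rewrite back_trib_SSS, !minus_IZR. Qed.

Definition back_comb (x y : Z) (k : nat) : Z := (x * back_trib k + y * back_trib (S k))%Z.

Lemma back_comb_trib_rec (x y : Z) (n : nat) :
  trib_rec (fun i => back_comb x y (n - i)) n.
Proof.
  intros i Hi.
  replace (n - (i - 1))%nat with (S (n - i)) by lia.
  replace (n - (i - 2))%nat with (S (S (n - i))) by lia.
  replace (n - (i - 3))%nat with (S (S (S (n - i)))) by lia.
  unfold back_comb; rewrite !back_trib_SSS; ring.
Qed.

Lemma back_comb_0 (x y : Z) : back_comb x y 0 = 0%Z.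
Proof. unfold back_comb; simpl; ring. Qed.

Lemma Rpower_half_sq (phi : R) (n : nat) :
  0 < phi -> Rpower phi (INR n / 2) ^ 2 = phi ^ n.
Proof.
  intro hp; rewrite <- (Rpower_pow n phi hp), <- Rpower_pow, Rpower_mult by apply exp_pos.
  f_equal; simpl; field.
Qed.

Lemma lt_mul_Rpower_half (phi k x : R) (n : nat) :
  0 < phi -> 0 < k -> x ^ 2 < k ^ 2 * phi ^ n -> x < k * Rpower phi (INR n / 2).
Proof.
  intros hp hk hx.
  assert (hX : 0 < Rpower phi (INR n / 2)) by apply exp_pos.
  rewrite <- (Rpower_half_sq phi n hp) in hx.
  destruct (Rle_or_lt x 0) as [hx0 | hx0]; [nra |].
  apply Rsqr_incrst_0; [unfold Rsqr; nra | lra | nra].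
Qed.

(* With n = m + 3 and a_i = back_comb x y (n - i), these constrain a_3, a_2, a_1. *)
Definition good_start_A (phi : R) (x y : Z) (m : nat) : Prop :=
  (back_comb x y m < 0)%Z /\ (back_comb x y (S m) <= 0)%Z /\
  (0 < back_comb x y (S (S m)))%Z /\
  IZR (back_comb x y (S (S m))) ^ 2 < (81/100) ^ 2 * phi ^ S (S (S m)).

Definition good_start_B (phi : R) (x y : Z) (m : nat) : Prop :=
  (back_comb x y m < 0)%Z /\ (0 < back_comb x y (S m))%Z /\
  (back_comb x y (S (S m)) <= 0)%Z /\
  IZR (back_comb x y (S m)) ^ 2 < (64/100) ^ 2 * phi ^ S (S (S m)).

Lemma trib_seq_of_good_start_A (phi : R) (x y : Z) (m : nat) :
  0 < phi -> good_start_A phi x y m ->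
  let n := S (S (S m)) in
  exists a : nat -> Z,
    trib_rec a n /\ a n = 0%Z /\ (a 1%nat > 0)%Z /\ (a 2%nat <= 0)%Z /\
    (a 3%nat < 0)%Z /\ IZR (a 1%nat) < 81 / 100 * Rpower phi (INR n / 2).
Proof.
  intros hp (h3 & h2 & h1 & hb) n.
  exists (fun i => back_comb x y (n - i)); subst n; cbn beta; simpl (S _ - _)%nat.
  rewrite Nat.sub_diag, back_comb_0, Nat.sub_0_r.
  repeat split; [apply back_comb_trib_rec | lia .. |].
  apply lt_mul_Rpower_half; [exact hp | lra | exact hb].
Qed.

Lemma trib_seq_of_good_start_B (phi : R) (x y : Z) (m : nat) :
  0 < phi -> good_start_B phi x y m ->
  let n := S (S (S m)) in
  exists b : nat -> Z,
    trib_rec b n /\ b n = 0%Z /\ (b 2%nat > 0)%Z /\ (b 1%nat <= 0)%Z /\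
    (b 3%nat < 0)%Z /\ IZR (b 2%nat) < 64 / 100 * Rpower phi (INR n / 2).
Proof.
  intros hp (h3 & h2 & h1 & hb) n.
  exists (fun i => back_comb x y (n - i)); subst n; cbn beta; simpl (S _ - _)%nat.
  rewrite Nat.sub_diag, back_comb_0, Nat.sub_0_r.
  repeat split; [apply back_comb_trib_rec | lia .. |].
  apply lt_mul_Rpower_half; [exact hp | lra | exact hb].
Qed.

Lemma Rsqr_plus_le_eps (p q : R) : (p + q) ^ 2 <= 11/10 * p ^ 2 + 11 * q ^ 2.
Proof. pose proof (pow2_ge_0 (p - 10 * q)); nra. Qed.

Lemma Cauchy_Schwarz_weighted (al be u v D : R) :
  0 < D -> (al * u + be * v) ^ 2 <= (al ^ 2 + be ^ 2 / D) * (u ^ 2 + D * v ^ 2).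
Proof.
  intro hD.
  assert (E : (al ^ 2 + be ^ 2 / D) * (u ^ 2 + D * v ^ 2) - (al * u + be * v) ^ 2
              = (be * u - al * D * v) ^ 2 / D) by (field; lra).
  assert (0 <= (be * u - al * D * v) ^ 2 / D)
    by (apply Rle_mult_inv_pos; [apply pow2_ge_0 | exact hD]).
  lra.
Qed.

Lemma Rdiv_between (x d lo hi : R) : 0 < d -> lo * d <= x <= hi * d -> lo <= x / d <= hi.
Proof.
  intros hd [hlo hhi]; unfold Rdiv.
  split; apply (Rmult_le_reg_r d); rewrite ?Rmult_assoc, ?Rinv_l; lra.
Qed.

(* (18393/10000, 15437/10000) approximates (phi, phi^2 - phi): this says that
   (a, b, c) is close to the plane L = 0, relative to its size. *)
Definition near_trib_plane (a b c : R) : Prop :=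
  1 <= Rabs a + Rabs b /\
  Rabs (c + 18393/10000 * a + 15437/10000 * b) <= 1/20 * (Rabs a + Rabs b).

Definition sign_pattern_A (x y a b c : R) : Prop :=
  x * a + y * b < 0 /\ x * b + y * c <= 0 /\ 0 < x * c + y * (a - b - c).

Definition sign_pattern_B (x y a b c : R) : Prop :=
  x * a + y * b < 0 /\ 0 < x * b + y * c /\ x * c + y * (a - b - c) <= 0.

(* Each direction (x, y) works on a sector of slopes of (a, b); the extra case
   splits are lines separating these sectors. *)
Lemma sign_cover_A (a b c : R) :
  near_trib_plane a b c ->
  sign_pattern_A 1 0 a b c \/ sign_pattern_A (-1) 0 a b c \/
  sign_pattern_A 1 1 a b c \/ sign_pattern_A (-1) (-1) a b c \/
  sign_pattern_A 2 1 a b c \/ sign_pattern_A (-2) (-1) a b c \/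
  sign_pattern_A 0 (-1) a b c \/ sign_pattern_A 0 1 a b c.
Proof.
  unfold near_trib_plane, sign_pattern_A, Rabs.
  destruct (Rle_lt_dec b 0), (Rle_lt_dec 0 (a - 1/10 * b)), (Rle_lt_dec 0 (a + 2/5 * b)),
    (Rle_lt_dec 0 (a + 9/10 * b));
    repeat destruct Rcase_abs; intros;
    repeat (solve [left; lra] || right); lra.
Qed.

Lemma sign_cover_B (a b c : R) :
  near_trib_plane a b c ->
  sign_pattern_B 1 0 a b c \/ sign_pattern_B (-1) 0 a b c \/
  sign_pattern_B 1 1 a b c \/ sign_pattern_B (-1) (-1) a b c \/
  sign_pattern_B 2 1 a b c \/ sign_pattern_B (-2) (-1) a b c \/
  sign_pattern_B 0 (-1) a b c \/ sign_pattern_B 0 1 a b c.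
Proof.
  unfold near_trib_plane, sign_pattern_B, Rabs.
  destruct (Rle_lt_dec b 0), (Rle_lt_dec 0 (a + 1/10 * b)), (Rle_lt_dec 0 (a + 7/10 * b)),
    (Rle_lt_dec 0 (a + 2 * b));
    repeat destruct Rcase_abs; intros;
    repeat (solve [left; lra] || right); lra.
Qed.

Section TribRoot.

Variable phi : R.
Hypothesis hphi : is_trib_root phi.

Local Notation t k := (IZR (back_trib k)).

Lemma trib_root_pow_lb (n : nat) : (18392/10000) ^ n <= phi ^ n.
Proof. destruct (trib_root_bounds phi hphi); apply pow_incr; lra. Qed.

Lemma trib_root_pow_ge (m : nat) : (5 <= m)%nat -> 21 <= phi ^ m /\ 38 <= phi ^ S m.
Proof.
  intro hm; destruct (trib_root_bounds phi hphi) as [h1 h2].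
  pose proof (trib_root_pow_lb 5); pose proof (trib_root_pow_lb 6).
  assert (phi ^ 5 <= phi ^ m) by (apply Rle_pow; [lra | exact hm]).
  assert (phi ^ 6 <= phi ^ S m) by (apply Rle_pow; [lra | lia]).
  simpl in *; lra.
Qed.

Lemma eq_mod_trib_poly (K X Y : R) : X - Y = K * (phi ^ 3 - phi ^ 2 - phi - 1) -> X = Y.
Proof. unfold is_trib_root in hphi; rewrite hphi; intro E; lra. Qed.

Definition trib_lform (a b c : R) : R := phi * a + (phi ^ 2 - phi) * b + c.

Definition trib_qform (a b c : R) : R :=
  (a - phi ^ 2 * c) ^ 2 + (phi ^ 2 - 1) * (b - phi * c) ^ 2
  - (1 + phi) * (a - phi ^ 2 * c) * (b - phi * c).

Lemma trib_lform_back_trib (m : nat) : trib_lform (t m) (t (S m)) (t (S (S m))) = / phi ^ m.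
Proof.
  assert (hp : 0 < phi) by (destruct (trib_root_bounds phi hphi); lra).
  induction m as [|m IH]; [unfold trib_lform; simpl; field |].
  rewrite IZR_back_trib_SSS.
  set (a := t m) in *; set (b := t (S m)) in *; set (c := t (S (S m))) in *.
  assert (E : phi * trib_lform b c (a - b - c) = trib_lform a b c)
    by (apply (eq_mod_trib_poly c); unfold trib_lform; ring).
  apply (Rmult_eq_reg_l phi); [| lra].
  rewrite E, IH; simpl; field; split; [apply pow_nonzero |]; lra.
Qed.

Lemma trib_qform_back_trib (m : nat) :
  trib_qform (t m) (t (S m)) (t (S (S m))) = phi ^ S m.
Proof.
  induction m as [|m IH].
  - apply (eq_mod_trib_poly phi); unfold trib_qform; simpl; ring.
  - rewrite IZR_back_trib_SSS.
    set (a := t m) in *; set (b := t (S m)) in *; set (c := t (S (S m))) in *.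
    change (phi ^ S (S m)) with (phi * phi ^ S m); rewrite <- IH.
    apply (eq_mod_trib_poly (c^2 + c^2*phi - c^2*phi^2 + b*c + 3*b*c*phi - b^2
                             + b^2*phi - 2*a*c*phi - 2*a*b*phi + a^2*phi)).
    unfold trib_qform; ring.
Qed.

Lemma back_trib_near_plane (m : nat) :
  (5 <= m)%nat -> near_trib_plane (t m) (t (S m)) (t (S (S m))).
Proof.
  intro hm.
  destruct (trib_root_bounds phi hphi) as [h1 h2].
  assert (p2 : 33826/10000 < phi ^ 2 < 33831/10000) by (split; nra).
  destruct (trib_root_pow_ge m hm) as [hm1 _].
  pose proof (trib_lform_back_trib m) as hL.
  assert (hI : 0 < / phi ^ m <= / 21)
    by (split; [apply Rinv_0_lt_compat | apply Rinv_le_contravar]; lra).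
  unfold trib_lform in hL.
  set (a := t m) in *; set (b := t (S m)) in *; set (c := t (S (S m))) in *.
  assert (hab : 1 <= Rabs a + Rabs b).
  { destruct (Z.eq_dec (back_trib m) 0) as [Ea | Ea];
      [destruct (Z.eq_dec (back_trib (S m)) 0) as [Eb | Eb] |].
    - exfalso; unfold a, b in hL; rewrite Ea, Eb in hL.
      assert (hc : 0 < c < 1) by lra.
      destruct hc as [hc0 hc1]; apply lt_IZR in hc0; apply lt_IZR in hc1; lia.
    - pose proof (Rabs_pos a).
      assert (1 <= Rabs b) by (unfold b; rewrite Rabs_Zabs; apply IZR_le; lia); lra.
    - pose proof (Rabs_pos b).
      assert (1 <= Rabs a) by (unfold a; rewrite Rabs_Zabs; apply IZR_le; lia); lra. }
  split; [exact hab |].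
  revert hab; unfold Rabs; repeat destruct Rcase_abs; intros; nra.
Qed.

Definition qdisc := phi ^ 2 - 1 - ((1 + phi) / 2) ^ 2.
Definition qcoord_u (a b c : R) := (a - phi ^ 2 * c) - (1 + phi) / 2 * (b - phi * c).
Definition qcoord_v (a b c : R) := b - phi * c.

Lemma qdisc_ge : 36/100 <= qdisc.
Proof. destruct (trib_root_bounds phi hphi); unfold qdisc; nra. Qed.

Lemma trib_qform_sum_sq (a b c : R) :
  trib_qform a b c = qcoord_u a b c ^ 2 + qdisc * qcoord_v a b c ^ 2.
Proof. unfold trib_qform, qcoord_u, qcoord_v, qdisc; field. Qed.

Definition lcoef (f1 f2 f3 : R) :=
  (f1 * phi ^ 2 + f2 * phi + f3) / (2 * phi ^ 3 - phi ^ 2 + 1).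
Definition ucoef (f1 f2 f3 : R) := f1 - lcoef f1 f2 f3 * phi.
Definition vcoef (f1 f2 f3 : R) :=
  f2 - lcoef f1 f2 f3 * (phi ^ 2 - phi) + ucoef f1 f2 f3 * ((1 + phi) / 2).

Lemma functional_decomp (f1 f2 f3 a b c : R) :
  f1 * a + f2 * b + f3 * c =
  ucoef f1 f2 f3 * qcoord_u a b c + vcoef f1 f2 f3 * qcoord_v a b c
  + lcoef f1 f2 f3 * trib_lform a b c.
Proof.
  destruct (trib_root_bounds phi hphi).
  unfold vcoef, ucoef, lcoef, qcoord_u, qcoord_v, trib_lform.
  field; nra.
Qed.

Definition qdual_norm2 (f1 f2 f3 : R) := ucoef f1 f2 f3 ^ 2 + vcoef f1 f2 f3 ^ 2 / qdisc.

Lemma functional_sq_le (f1 f2 f3 a b c : R) :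
  (f1 * a + f2 * b + f3 * c) ^ 2 <=
  11/10 * qdual_norm2 f1 f2 f3 * trib_qform a b c
  + 11 * lcoef f1 f2 f3 ^ 2 * trib_lform a b c ^ 2.
Proof.
  pose proof qdisc_ge.
  rewrite functional_decomp, trib_qform_sum_sq.
  eapply Rle_trans; [apply Rsqr_plus_le_eps |].
  pose proof (Cauchy_Schwarz_weighted (ucoef f1 f2 f3) (vcoef f1 f2 f3)
                (qcoord_u a b c) (qcoord_v a b c) qdisc ltac:(lra)).
  unfold qdual_norm2; nra.
Qed.

(* The factors 11/10 and 1/1000 leave room for the contribution of the form L, which
   is at most phi^(-m) on the window at m >= 5. *)
Definition small_functional (k f1 f2 f3 : R) : Prop :=
  11/10 * qdual_norm2 f1 f2 f3 + lcoef f1 f2 f3 ^ 2 / 1000 < k * phi ^ 2.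

Lemma window_functional_sq_lt (k f1 f2 f3 : R) (m : nat) :
  (5 <= m)%nat -> small_functional k f1 f2 f3 ->
  (f1 * t m + f2 * t (S m) + f3 * t (S (S m))) ^ 2 < k * phi ^ S (S (S m)).
Proof.
  intros hm hk.
  destruct (trib_root_pow_ge m hm) as [hm1 hm2].
  eapply Rle_lt_trans; [apply functional_sq_le |].
  rewrite trib_qform_back_trib, trib_lform_back_trib.
  set (P := phi ^ S m) in *; set (I := / phi ^ m).
  assert (hI : 0 < I <= / 21)
    by (split; [apply Rinv_0_lt_compat | apply Rinv_le_contravar]; lra).
  assert (hsmall : 11 * I ^ 2 <= P / 1000) by nra.
  assert (hl : 11 * lcoef f1 f2 f3 ^ 2 * I ^ 2 <= lcoef f1 f2 f3 ^ 2 / 1000 * P)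
    by (pose proof (pow2_ge_0 (lcoef f1 f2 f3)); nra).
  replace (phi ^ S (S (S m))) with (phi ^ 2 * P) by (unfold P; simpl; ring).
  unfold small_functional in hk; nra.
Qed.

Lemma small_functional_opp (k f1 f2 f3 : R) :
  small_functional k f1 f2 f3 -> small_functional k (- f1) (- f2) (- f3).
Proof.
  assert (hk : 2 * phi ^ 3 - phi ^ 2 + 1 <> 0) by (destruct (trib_root_bounds phi hphi); nra).
  assert (El : lcoef (- f1) (- f2) (- f3) = - lcoef f1 f2 f3)
    by (unfold lcoef; field; exact hk).
  assert (Eu : ucoef (- f1) (- f2) (- f3) = - ucoef f1 f2 f3)
    by (unfold ucoef; rewrite El; ring).
  assert (Ev : vcoef (- f1) (- f2) (- f3) = - vcoef f1 f2 f3)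
    by (unfold vcoef; rewrite El, Eu; ring).
  unfold small_functional, qdual_norm2; rewrite El, Eu, Ev.
  now rewrite <- !Rsqr_pow2, <- !Rsqr_neg.
Qed.

Lemma small_functional_sign (s : R) {k f1 f2 f3 g1 g2 g3 : R} :
  small_functional k f1 f2 f3 -> s = 1 \/ s = -1 ->
  g1 = s * f1 -> g2 = s * f2 -> g3 = s * f3 -> small_functional k g1 g2 g3.
Proof.
  intros h [-> | ->] -> -> ->.
  - now rewrite !Rmult_1_l.
  - replace (-1 * f1) with (- f1) by ring; replace (-1 * f2) with (- f2) by ring;
      replace (-1 * f3) with (- f3) by ring.
    now apply small_functional_opp.
Qed.

(* The tactic takes approximate values of lcoef, ucoef and vcoef and checks them by
   interval arithmetic from the bounds on phi. *)
Ltac small_functional_near r u v :=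
  lazymatch goal with |- small_functional _ ?f1 ?f2 ?f3 =>
  destruct (trib_root_bounds phi hphi) as [h1 h2];
  assert (p2 : 33826/10000 < phi ^ 2 < 33831/10000) by (split; nra);
  assert (p3 : 62213/10000 < phi ^ 3 < 62229/10000) by (split; nra);
  pose proof qdisc_ge as hD;
  assert (hl : r - 1/1000 <= lcoef f1 f2 f3 <= r + 1/1000)
    by (unfold lcoef; apply Rdiv_between; lra);
  assert (hu : u - 1/50 <= ucoef f1 f2 f3 <= u + 1/50)
    by (unfold ucoef; split; nra);
  assert (hv : v - 1/50 <= vcoef f1 f2 f3 <= v + 1/50)
    by (unfold vcoef, ucoef; split; nra);
  assert (hq : vcoef f1 f2 f3 ^ 2 / qdisc <= vcoef f1 f2 f3 ^ 2 / (36/100))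
    by (apply Rmult_le_compat_l; [apply pow2_ge_0 | apply Rinv_le_contravar; lra]);
  unfold small_functional, qdual_norm2; nra
  end.

Lemma small_functional_A_001 : small_functional ((81/100) ^ 2) 0 0 1.
Proof. small_functional_near (99/1000) (-18/100) (-41/100). Qed.

Lemma small_functional_A_1m10 : small_functional ((81/100) ^ 2) 1 (-1) 0.
Proof. small_functional_near (153/1000) (72/100) (-22/100). Qed.

Lemma small_functional_A_1m11 : small_functional ((81/100) ^ 2) 1 (-1) 1.
Proof. small_functional_near (253/1000) (54/100) (-63/100). Qed.

Lemma small_functional_A_1m1m1 : small_functional ((81/100) ^ 2) 1 (-1) (-1).
Proof. small_functional_near (54/1000) (90/100) (20/100). Qed.

Lemma small_functional_B_010 : small_functional ((64/100) ^ 2) 0 1 0.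
Proof. small_functional_near (183/1000) (-34/100) (24/100). Qed.

Lemma small_functional_B_011 : small_functional ((64/100) ^ 2) 0 1 1.
Proof. small_functional_near (282/1000) (-52/100) (-17/100). Qed.

Lemma small_functional_B_021 : small_functional ((64/100) ^ 2) 0 2 1.
Proof. small_functional_near (465/1000) (-86/100) (7/100). Qed.

Lemma small_functional_B_001 : small_functional ((64/100) ^ 2) 0 0 1.
Proof. small_functional_near (99/1000) (-18/100) (-41/100). Qed.

Lemma good_start_A_of_pattern (x y : Z) (m : nat) :
  (5 <= m)%nat -> sign_pattern_A (IZR x) (IZR y) (t m) (t (S m)) (t (S (S m))) ->
  small_functional ((81/100) ^ 2) (IZR y) (- IZR y) (IZR x - IZR y) -> good_start_A phi x y m.
Proof.
  intros hm (h3 & h2 & h1) hk; rewrite <- IZR_back_trib_SSS in h1.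
  unfold good_start_A, back_comb.
  repeat split; [apply lt_IZR | apply le_IZR | apply lt_IZR |];
    rewrite ?plus_IZR, ?mult_IZR; [lra .. |].
  rewrite IZR_back_trib_SSS.
  eapply Rle_lt_trans; [| exact (window_functional_sq_lt _ _ _ _ m hm hk)].
  apply Req_le; ring.
Qed.

Lemma good_start_B_of_pattern (x y : Z) (m : nat) :
  (5 <= m)%nat -> sign_pattern_B (IZR x) (IZR y) (t m) (t (S m)) (t (S (S m))) ->
  small_functional ((64/100) ^ 2) 0 (IZR x) (IZR y) -> good_start_B phi x y m.
Proof.
  intros hm (h3 & h2 & h1) hk; rewrite <- IZR_back_trib_SSS in h1.
  unfold good_start_B, back_comb.
  repeat split; [apply lt_IZR | apply lt_IZR | apply le_IZR |];
    rewrite ?plus_IZR, ?mult_IZR; [lra .. |].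
  eapply Rle_lt_trans; [| exact (window_functional_sq_lt _ _ _ _ m hm hk)].
  apply Req_le; ring.
Qed.

Lemma good_start_A_exists (m : nat) : (1 <= m)%nat -> exists x y, good_start_A phi x y m.
Proof.
  intro hm; destruct (le_lt_dec 5 m) as [h5 | h5].
  - destruct (sign_cover_A _ _ _ (back_trib_near_plane m h5))
      as [H | [H | [H | [H | [H | [H | [H | H]]]]]]];
      eexists _, _; apply (good_start_A_of_pattern _ _ m h5 H).
    + apply (small_functional_sign 1 small_functional_A_001); lra.
    + apply (small_functional_sign (-1) small_functional_A_001); lra.
    + apply (small_functional_sign 1 small_functional_A_1m10); lra.
    + apply (small_functional_sign (-1) small_functional_A_1m10); lra.
    + apply (small_functional_sign 1 small_functional_A_1m11); lra.
    + apply (small_functional_sign (-1) small_functional_A_1m11); lra.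
    + apply (small_functional_sign (-1) small_functional_A_1m1m1); lra.
    + apply (small_functional_sign 1 small_functional_A_1m1m1); lra.
  - pose proof (trib_root_pow_lb (S (S (S m)))).
    assert (Hm : (m = 1 \/ m = 2 \/ m = 3 \/ m = 4)%nat) by lia.
    destruct Hm as [-> | [-> | [-> | ->]]];
      [exists (-1)%Z, (-1)%Z | exists 0%Z, 1%Z | exists 1%Z, 0%Z | exists (-2)%Z, (-1)%Z];
      unfold good_start_A, back_comb; simpl in *; repeat split; try lia; lra.
Qed.

Lemma good_start_B_exists (m : nat) : (1 <= m)%nat -> exists x y, good_start_B phi x y m.
Proof.
  intro hm; destruct (le_lt_dec 5 m) as [h5 | h5].
  - destruct (sign_cover_B _ _ _ (back_trib_near_plane m h5))
      as [H | [H | [H | [H | [H | [H | [H | H]]]]]]];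
      eexists _, _; apply (good_start_B_of_pattern _ _ m h5 H).
    + apply (small_functional_sign 1 small_functional_B_010); lra.
    + apply (small_functional_sign (-1) small_functional_B_010); lra.
    + apply (small_functional_sign 1 small_functional_B_011); lra.
    + apply (small_functional_sign (-1) small_functional_B_011); lra.
    + apply (small_functional_sign 1 small_functional_B_021); lra.
    + apply (small_functional_sign (-1) small_functional_B_021); lra.
    + apply (small_functional_sign (-1) small_functional_B_001); lra.
    + apply (small_functional_sign 1 small_functional_B_001); lra.
  - pose proof (trib_root_pow_lb (S (S (S m)))).
    assert (Hm : (m = 1 \/ m = 2 \/ m = 3 \/ m = 4)%nat) by lia.
    destruct Hm as [-> | [-> | [-> | ->]]];
      [exists 0%Z, (-1)%Z | exists (-1)%Z, 0%Z | exists 1%Z, 1%Z | exists 0%Z, (-1)%Z];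
      unfold good_start_B, back_comb; simpl in *; repeat split; try lia; lra.
Qed.

End TribRoot.

Theorem lemma5 (phi : R) (hphi : is_trib_root phi) :
  (forall n : nat, (4 <= n)%nat ->
     exists a : nat -> Z,
       trib_rec a n /\ a n = 0%Z /\ (a 1%nat > 0)%Z /\ (a 2%nat <= 0)%Z /\
       (a 3%nat < 0)%Z /\ IZR (a 1%nat) < 81 / 100 * Rpower phi (INR n / 2)) /\
  (forall n : nat, (4 <= n)%nat ->
     exists b : nat -> Z,
       trib_rec b n /\ b n = 0%Z /\ (b 2%nat > 0)%Z /\ (b 1%nat <= 0)%Z /\
       (b 3%nat < 0)%Z /\ IZR (b 2%nat) < 64 / 100 * Rpower phi (INR n / 2)).
Proof.
  assert (hp : 0 < phi) by (destruct (trib_root_bounds phi hphi); lra).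
  split; intros n hn; destruct n as [| [| [| [| m]]]]; try lia.
  - destruct (good_start_A_exists phi hphi (S m)) as (x & y & H); [lia |].
    exact (trib_seq_of_good_start_A phi x y (S m) hp H).
  - destruct (good_start_B_exists phi hphi (S m)) as (x & y & H); [lia |].
    exact (trib_seq_of_good_start_B phi x y (S m) hp H).
Qed.
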